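(* If the alphabet $\mathcal{A}\subset\mathbb{N}$ contains two consecutive positive integers $m$ and $m+1$, then the semigroup $\Gamma_{\mathcal{A}}$ has everywhere strong approximation.
   Context: For $a\in\mathbb{N}$ let $\gamma_a=\begin{pmatrix}0&1\\1&a\end{pmatrix}$. $\Gamma_{\mathcal{A}}\subset\mathrm{SL}_2(\mathbb{Z})$ is the semigroup generated by the products $\gamma_a\gamma_{a'}$, $a,a'\in\mathcal{A}$. $\Gamma_{\mathcal{A}}$ has everywhere strong approximation if for every $q\in\mathbb{N}$ the reduction of $\Gamma_{\mathcal{A}}$ modulo $q$ equals $\mathrm{SL}_2(\mathbb{Z}/q\mathbb{Z})$. *)

From HB Require Import structures.
From mathcomp Require Import all_boot all_order all_algebra.
Set Implicit Arguments. Unset Strict Implicit. Unset Printing Implicit Defensive.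
Import Order.TTheory GRing.Theory Num.Theory.
Local Open Scope ring_scope.

Definition gamma (a : nat) : 'M[int]_2 :=
  \matrix_(i < 2, j < 2)
    if ((i : nat) == 0%N) && ((j : nat) == 0%N) then 0
    else if ((i : nat) == 1%N) && ((j : nat) == 1%N) then (a%:Z)
    else 1.

Inductive in_Gamma (A : nat -> Prop) : 'M[int]_2 -> Prop :=
  | in_Gamma_gen a a' : A a -> A a' -> in_Gamma A (gamma a *m gamma a')
  | in_Gamma_mul g h : in_Gamma A g -> in_Gamma A h -> in_Gamma A (g *m h).

(* reduction of an integer matrix modulo q (meaningful for q >= 2) *)
Definition reduce_mod (q : nat) (g : 'M[int]_2) : 'M['Z_q]_2 :=
  map_mx (fun z : int => z%:~R) g.

(* For q = 1, SL_2(Z/1Z) is the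
   trivial group and the condition is vacuous (Gamma_A nonempty), and 'Z_1
   is not Z/1Z in MathComp, so we quantify over q >= 2. *)
Definition everywhere_strong_approximation (A : nat -> Prop) : Prop :=
  forall q : nat, (1 < q)%N ->
    forall M : 'M['Z_q]_2,
      (exists g, in_Gamma A g /\ reduce_mod q g = M) <-> \det M = 1.

From mathcomp Require Import all_boot all_order all_algebra all_fingroup.
From mathcomp Require Import ring zify.
Import GRing.Theory.
Set Implicit Arguments. Unset Strict Implicit. Unset Printing Implicit Defensive.
Local Open Scope ring_scope.

(* Since gamma_a gamma_b = [[1, b], [a, 1 + ab]] is the product of the elementary
   matrices L(a) = [[1, 0], [a, 1]] and U(b) = [[1, b], [0, 1]], we get
   U(1) = (L(m) U(m))^-1 L(m) U(m+1) and L(1) = L(m+1) U(m) (L(m) U(m))^-1.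
   Modulo q the reduced semigroup lies in the finite group SL_2(Z/qZ), so it is
   closed under inverses; hence it contains U(1) and L(1), which generate
   SL_2(Z/qZ) by the Euclidean algorithm on the first column. *)

Section Mx2.
Variable R : comNzRingType.

Definition mx2 (a b c d : R) : 'M[R]_2 :=
  \matrix_(i, j) if (i : nat) == 0%N then (if (j : nat) == 0%N then a else b)
                 else (if (j : nat) == 0%N then c else d).

Lemma mx2E (M : 'M[R]_2) : M = mx2 (M 0 0) (M 0 1) (M 1 0) (M 1 1).
Proof.
apply/matrixP => i j; rewrite !mxE.
by case: i => [[|[|i]] Hi] //; case: j => [[|[|j]] Hj] //=; congr (M _ _); apply/val_inj.
Qed.

Lemma mul_mx2 a b c d a' b' c' d' :
  mx2 a b c d * mx2 a' b' c' d' =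
  mx2 (a * a' + b * c') (a * b' + b * d') (c * a' + d * c') (c * b' + d * d').
Proof.
rewrite -mulmxE; apply/matrixP => i j.
rewrite !mxE !big_ord_recr big_ord0 /= add0r !mxE.
by case: i => [[|[|i]] Hi] //; case: j => [[|[|j]] Hj].
Qed.

Lemma det_mx2 a b c d : \det (mx2 a b c d) = a * d - b * c.
Proof.
rewrite (expand_det_row _ 0) !big_ord_recr big_ord0 /= add0r.
by rewrite /cofactor !det_mx11 !mxE /= expr0 expr1 !mul1r mulN1r mulrN.
Qed.

Lemma mx2_1 : mx2 1 0 0 1 = 1.
Proof.
apply/matrixP => i j; rewrite !mxE.
by case: i => [[|[|i]] Hi] //; case: j => [[|[|j]] Hj].
Qed.

Definition elem_up (k : R) := mx2 1 k 0 1.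
Definition elem_lo (k : R) := mx2 1 0 k 1.

Lemma elem_upD k l : elem_up k * elem_up l = elem_up (k + l).
Proof. by rewrite mul_mx2; congr mx2; ring. Qed.

Lemma elem_loD k l : elem_lo k * elem_lo l = elem_lo (k + l).
Proof. by rewrite mul_mx2; congr mx2; ring. Qed.

Lemma elem_up0 : elem_up 0 = 1.
Proof. exact: mx2_1. Qed.

Lemma elem_lo0 : elem_lo 0 = 1.
Proof. exact: mx2_1. Qed.

Lemma elem_up_natr n : elem_up n%:R = elem_up 1 ^+ n.
Proof.
elim: n => [|n IH]; first by rewrite elem_up0.
by rewrite exprSr -IH elem_upD -natr1.
Qed.

Lemma elem_lo_natr n : elem_lo n%:R = elem_lo 1 ^+ n.
Proof.
elim: n => [|n IH]; first by rewrite elem_lo0.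
by rewrite exprSr -IH elem_loD -natr1.
Qed.

Lemma det_elem_up k : \det (elem_up k) = 1.
Proof. by rewrite det_mx2; ring. Qed.

Lemma det_elem_lo k : \det (elem_lo k) = 1.
Proof. by rewrite det_mx2; ring. Qed.

Lemma elem_lo_mul_up c b : elem_lo c * elem_up b = mx2 1 b c (1 + c * b).
Proof. by rewrite mul_mx2; congr mx2; ring. Qed.

Lemma elem_up_mul00 k (M : 'M[R]_2) : (elem_up k * M) 0 0 = M 0 0 + k * M 1 0.
Proof. by rewrite [M]mx2E mul_mx2 !mxE /=; ring. Qed.

Lemma elem_up_mul10 k (M : 'M[R]_2) : (elem_up k * M) 1 0 = M 1 0.
Proof. by rewrite [M]mx2E mul_mx2 !mxE /=; ring. Qed.

Lemma elem_lo_mul00 k (M : 'M[R]_2) : (elem_lo k * M) 0 0 = M 0 0.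
Proof. by rewrite [M]mx2E mul_mx2 !mxE /=; ring. Qed.

Lemma elem_lo_mul10 k (M : 'M[R]_2) : (elem_lo k * M) 1 0 = M 1 0 + k * M 0 0.
Proof. by rewrite [M]mx2E mul_mx2 !mxE /=; ring. Qed.

End Mx2.

Lemma map_mx2 (R S : comNzRingType) (f : R -> S) a b c d :
  map_mx f (mx2 a b c d) = mx2 (f a) (f b) (f c) (f d).
Proof.
apply/matrixP => i j; rewrite !mxE.
by case: i => [[|[|i]] Hi] //; case: j => [[|[|j]] Hj].
Qed.

Lemma mulr_closed_expS (R : pzSemiRingType) (P : R -> Prop) :
  (forall x y, P x -> P y -> P (x * y)) -> forall x n, P x -> P (x ^+ n.+1).
Proof.
by move=> P_mul x n Px; elim: n => [|n IH]; rewrite ?expr1 // exprS; apply: P_mul.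
Qed.

Lemma mulr_closed_unit_inv (R : finUnitRingType) (P : R -> Prop) :
  (forall x y, P x -> P y -> P (x * y)) ->
  forall x, x \is a GRing.unit -> P x -> P x^-1.
Proof.
move=> P_mul x Ux Px.
pose k := #[FinRing.unit R Ux]%g.
have xk : x ^+ k = 1.
  by have := f_equal val (expg_order (FinRing.unit R Ux)); rewrite FinRing.val_unitX.
suff -> : x^-1 = x ^+ (k.-1 + k.-1).+1 by apply: mulr_closed_expS.
have k_gt0 : (0 < k)%N := order_gt0 _.
apply: (mulrI Ux); rewrite mulrV // -exprS.
have -> : ((k.-1 + k.-1).+2 = k + k)%N by lia.
by rewrite exprD xk mulr1.
Qed.

Section SL2Zp.
Variables (q : nat) (P : 'M['Z_q]_2 -> Prop).
Hypotheses (q_gt1 : (1 < q)%N) (P_mul : forall x y, P x -> P y -> P (x * y)).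
Hypotheses (P_up1 : P (elem_up 1)) (P_lo1 : P (elem_lo 1)).

Lemma Zp_natr_succ (k : 'Z_q) : exists n, k = n.+1%:R.
Proof.
exists (k + q.-1)%N; have -> : (k + q.-1).+1 = (k + q)%N by lia.
by rewrite natrD pchar_Zp // addr0 natr_Zp.
Qed.

Lemma P_elem_up k : P (elem_up k).
Proof. by have [n ->] := Zp_natr_succ k; rewrite elem_up_natr; exact: mulr_closed_expS. Qed.

Lemma P_elem_lo k : P (elem_lo k).
Proof. by have [n ->] := Zp_natr_succ k; rewrite elem_lo_natr; exact: mulr_closed_expS. Qed.

Lemma P_elem_upK k M : P (elem_up k * M) -> P M.
Proof.
move=> PkM; rewrite -[M]mul1r -elem_up0 -(addNr k) -elem_upD -mulrA.
exact: P_mul (P_elem_up _) PkM.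
Qed.

Lemma P_elem_loK k M : P (elem_lo k * M) -> P M.
Proof.
move=> PkM; rewrite -[M]mul1r -elem_lo0 -(addNr k) -elem_loD -mulrA.
exact: P_mul (P_elem_lo _) PkM.
Qed.

Lemma P_det1_00_1 M : \det M = 1 -> M 0 0 = 1 -> P M.
Proof.
move=> detM M00; rewrite [M]mx2E M00.
have -> : M 1 1 = 1 + M 1 0 * M 0 1.
  by rewrite -detM [M in \det M]mx2E det_mx2 M00; ring.
by rewrite -elem_lo_mul_up; apply: P_mul; [apply: P_elem_lo | apply: P_elem_up].
Qed.

Lemma P_det1_00_0 M : \det M = 1 -> M 0 0 = 0 -> P M.
Proof.
move=> detM M00; apply: (@P_elem_upK (- M 0 1)); apply: P_det1_00_1.
  by rewrite det_mulmx detM det_elem_up mulr1.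
rewrite elem_up_mul00 M00 add0r -detM [M in \det M]mx2E det_mx2 M00; ring.
Qed.

Lemma P_det1_10_0 M : \det M = 1 -> M 1 0 = 0 -> P M.
Proof.
move=> detM M10; apply: (@P_elem_loK ((1 - M 0 0) * M 1 1)); apply: (@P_elem_upK 1).
apply: P_det1_00_1; first by rewrite !det_mulmx detM det_elem_up det_elem_lo !mulr1.
have adE : M 0 0 * M 1 1 = 1 by rewrite -detM [M in \det M]mx2E det_mx2 M10; ring.
rewrite elem_up_mul00 elem_lo_mul00 elem_lo_mul10 M10.
transitivity (M 0 0 + (1 - M 0 0) * (M 0 0 * M 1 1)); first by ring.
by rewrite adE; ring.
Qed.

Lemma val_Zp_natr_small n : (n < q)%N -> nat_of_ord (n%:R : 'Z_q) = n.
Proof. by move=> n_lt_q; rewrite val_Zp_nat // modn_small. Qed.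

Lemma ltn_val_Zp (x : 'Z_q) : (x < q)%N.
Proof. by rewrite -[in X in (_ < X)%N](Zp_cast q_gt1) ltn_ord. Qed.

(* Strong induction on the sum of the representatives of the first column,
   which one Euclidean division step decreases. *)
Lemma P_det1 M : \det M = 1 -> P M.
Proof.
move: (leqnn (addn (M 0 0) (M 1 0))); move: {2}(addn _ _) => n.
elim: n M => [|n IH] M size_M detM.
  apply: P_det1_00_0 => //; apply: val_inj => /=.
  by apply/eqP; rewrite -leqn0 (leq_trans _ size_M) // leq_addr.
have [M00|a_neq0] := eqVneq (M 0 0) 0; first exact: P_det1_00_0.
have [M10|c_neq0] := eqVneq (M 1 0) 0; first exact: P_det1_10_0.
pose a := nat_of_ord (M 0 0); pose c := nat_of_ord (M 1 0).
have size_ac : (a + c <= n.+1)%N := size_M.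
have a_gt0 : (0 < a)%N by rewrite lt0n -[0%N]/(val (0 : 'Z_q)) val_eqE.
have c_gt0 : (0 < c)%N by rewrite lt0n -[0%N]/(val (0 : 'Z_q)) val_eqE.
have a_lt_q : (a < q)%N := ltn_val_Zp (M 0 0).
have c_lt_q : (c < q)%N := ltn_val_Zp (M 1 0).
have [aE cE] : M 0 0 = a%:R /\ M 1 0 = c%:R by rewrite !natr_Zp.
have [c_le_a|a_lt_c] := leqP c a.
- have rem_a : M 0 0 + - (a %/ c)%:R * M 1 0 = (a %% c)%:R.
    by rewrite aE cE {1}(divn_eq a c) natrD natrM; ring.
  apply: (@P_elem_upK (- (a %/ c)%:R)); apply: IH.
    have a_mod_c := ltn_pmod a c_gt0.
    rewrite elem_up_mul00 elem_up_mul10 rem_a val_Zp_natr_small -/c; first lia.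
    exact: ltn_trans a_mod_c c_lt_q.
  by rewrite det_mulmx det_elem_up mul1r.
- have rem_c : M 1 0 + - (c %/ a)%:R * M 0 0 = (c %% a)%:R.
    by rewrite aE cE {1}(divn_eq c a) natrD natrM; ring.
  apply: (@P_elem_loK (- (c %/ a)%:R)); apply: IH.
    have c_mod_a := ltn_pmod c a_gt0.
    rewrite elem_lo_mul00 elem_lo_mul10 rem_c val_Zp_natr_small -/a; first lia.
    exact: ltn_trans c_mod_a a_lt_q.
  by rewrite det_mulmx det_elem_lo mul1r.
Qed.

End SL2Zp.

Lemma gamma_mx2 a : gamma a = mx2 0 1 1 a%:Z.
Proof.
apply/matrixP => i j; rewrite !mxE.
by case: i => [[|[|i]] Hi] //; case: j => [[|[|j]] Hj].
Qed.

Lemma det_gamma a : \det (gamma a) = -1.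
Proof. by rewrite gamma_mx2 det_mx2; ring. Qed.

Lemma gamma_mulE a b : gamma a *m gamma b = elem_lo a%:Z * elem_up b%:Z.
Proof. by rewrite mulmxE !gamma_mx2 elem_lo_mul_up mul_mx2; congr mx2; ring. Qed.

Lemma det_in_Gamma A g : in_Gamma A g -> \det g = 1.
Proof.
elim=> [a b _ _|g1 g2 _ detg1 _ detg2]; rewrite det_mulmx ?detg1 ?detg2 ?mulr1 //.
by rewrite !det_gamma mulrNN mulr1.
Qed.

Lemma reduce_modM q (g h : 'M[int]_2) :
  reduce_mod q (g *m h) = reduce_mod q g *m reduce_mod q h.
Proof. exact: map_mxM. Qed.

Lemma reduce_mod_gammaM q a b :
  reduce_mod q (gamma a *m gamma b) = elem_lo a%:R * elem_up b%:R.
Proof. by rewrite gamma_mulE -mulmxE reduce_modM /reduce_mod !map_mx2. Qed.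

Section ReducedGamma.
Variables (A : nat -> Prop) (q : nat).

Definition reduced_Gamma (M : 'M['Z_q]_2) : Prop :=
  exists g, in_Gamma A g /\ reduce_mod q g = M.

Lemma det_reduced_Gamma M : reduced_Gamma M -> \det M = 1.
Proof.
by move=> [g [Gg <-]]; rewrite det_map_mx (det_in_Gamma Gg).
Qed.

Lemma reduced_Gamma_mul x y :
  reduced_Gamma x -> reduced_Gamma y -> reduced_Gamma (x * y).
Proof.
move=> [g [Gg <-]] [h [Gh <-]]; exists (g *m h).
by split; [exact: in_Gamma_mul | rewrite reduce_modM mulmxE].
Qed.

Lemma reduced_Gamma_lo_up a b :
  A a -> A b -> reduced_Gamma (elem_lo a%:R * elem_up b%:R).
Proof.
move=> Aa Ab; exists (gamma a *m gamma b).
by rewrite reduce_mod_gammaM; split; first exact: in_Gamma_gen.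
Qed.

Lemma reduced_Gamma_inv x : reduced_Gamma x -> reduced_Gamma x^-1.
Proof.
move=> Gx; have Ux : x \is a GRing.unit by rewrite unitmxE (det_reduced_Gamma Gx) unitr1.
exact: mulr_closed_unit_inv reduced_Gamma_mul x Ux Gx.
Qed.

Variable m : nat.
Hypotheses (Am : A m) (Am1 : A m.+1).

Lemma reduced_Gamma_up1 : reduced_Gamma (elem_up 1).
Proof.
have -> : elem_up (1 : 'Z_q) = (elem_lo m%:R * elem_up m%:R)^-1 * (elem_lo m%:R * elem_up m.+1%:R).
  rewrite -natr1 -elem_upD mulrA mulKr //.
  by rewrite unitmxE det_mulmx det_elem_lo det_elem_up mulr1 unitr1.
by apply: reduced_Gamma_mul; [apply: reduced_Gamma_inv |]; apply: reduced_Gamma_lo_up.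
Qed.

Lemma reduced_Gamma_lo1 : reduced_Gamma (elem_lo 1).
Proof.
have -> : elem_lo (1 : 'Z_q) = (elem_lo m.+1%:R * elem_up m%:R) * (elem_lo m%:R * elem_up m%:R)^-1.
  rewrite -natr1 addrC -elem_loD -(mulrA (elem_lo 1)) mulrK //.
  by rewrite unitmxE det_mulmx det_elem_lo det_elem_up mulr1 unitr1.
by apply: reduced_Gamma_mul; [| apply: reduced_Gamma_inv]; apply: reduced_Gamma_lo_up.
Qed.

End ReducedGamma.

Theorem lemmaB3 (A : nat -> Prop) (m : nat) :
  (0 < m)%N -> A m -> A m.+1 -> everywhere_strong_approximation A.
Proof.
move=> _ Am Am1 q q_gt1 M; split; first exact: det_reduced_Gamma.
apply: (P_det1 q_gt1 (@reduced_Gamma_mul A q)).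
- exact: reduced_Gamma_up1 Am Am1.
- exact: reduced_Gamma_lo1 Am Am1.
Qed.
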